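(* For all $\varepsilon,\delta>0$ and all $k\in\mathbb N$ there exists $N=N(\delta,\varepsilon,k)$ such that: if $r>N$ and $A\subseteq\Lambda_k^r$ has $|A|\ge\delta|\Lambda_k^r|$, then for every $x\in\Lambda_k^r$ there are $a_1,a_2\in A$ with $a_1^{-1}a_2\in U_{r\varepsilon}(x)$.
   Context: $\Lambda_k=\{\lambda\in\mathbb C:\lambda^k=1\}$ is the multiplicative group of $k$-th roots of unity, and $\Lambda_k^r$ is its $r$-th Cartesian power with coordinatewise multiplication. Let $d_0$ be one half of Euclidean distance on $\Lambda_k$, and for $x,y\in\Lambda_k^r$ let $d(x,y)=\sum_{j=1}^r d_0(x_j,y_j)$. For $t\ge0$, $U_t(x)=\{y\in\Lambda_k^r:d(x,y)\le t\}$. *)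

From mathcomp Require Import all_boot all_order all_algebra.
From mathcomp Require Import all_classical all_reals all_analysis.
Set Implicit Arguments. Unset Strict Implicit. Unset Printing Implicit Defensive.
Import Order.TTheory GRing.Theory Num.Theory.
Local Open Scope ring_scope.

(* Model: Lambda_k = {exp(2 pi i j / k) : j < k}, the root with index j is
   encoded by j : 'I_k; its position in the plane is (cos, sin) of ang k j. *)
Section Defs.
Variable R : realType.

Definition ang (k j : nat) : R := 2 * pi * j%:R / k%:R.

Definition d0 (k i j : nat) : R :=
  Num.sqrt ((cos (ang k i) - cos (ang k j)) ^+ 2
          + (sin (ang k i) - sin (ang k j)) ^+ 2) / 2.

Definition Lam (k r : nat) := {ffun 'I_r -> 'I_k}.

Definition dist (k r : nat) (x y : 'I_r -> nat) : R :=
  \sum_(j < r) d0 k (x j) (y j).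

(* index vector of a1^{-1} a2 (coordinatewise): exp(2pi i (b - a)/k) *)
Definition quotL (k r : nat) (a1 a2 : Lam k r) : 'I_r -> nat :=
  fun j => (((a2 j : nat) + (k - (a1 j : nat))) %% k)%N.

Definition inU (k r : nat) (t : R) (x y : 'I_r -> nat) : Prop :=
  dist k x y <= t.
End Defs.

(** A real function on [T^r] that changes by at most 1 when one coordinate
    changes has total pairwise squared spread at most [2 r |T^r|^2] (an
    Efron-Stein inequality, by induction on [r], splitting off the first
    coordinate).  Apply it to the Hamming distance to [A]: if every point of
    the translate [B = A x^-1] were farther than [r eps] from [A], the pairs in
    [A x B] alone would contribute at least [(delta |T^r|)^2 (r eps)^2], which
    exceeds [2 r |T^r|^2] once [r delta^2 eps^2 > 2].  So some [a1 in A] agrees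
    with [a2 x^-1] (for some [a2 in A]) outside at most [r eps] coordinates;
    there [a1^-1 a2] agrees with [x], and elsewhere [d0 <= 1]. *)
From mathcomp Require Import all_boot all_order all_algebra.
From mathcomp Require Import all_classical all_reals all_analysis.
From mathcomp Require Import ring lra.
Import Order.TTheory GRing.Theory Num.Theory.
Local Open Scope ring_scope.
Set Implicit Arguments. Unset Strict Implicit. Unset Printing Implicit Defensive.

Section PairSquaredDifferences.
Variables (R : realFieldType) (X : finType).

Definition pair_sqdiff (u v : X -> R) : R :=
  \sum_(x : X) \sum_(y : X) (u x - v y) ^+ 2.

Lemma pair_sqdiffE (u v : X -> R) : pair_sqdiff u v =
  #|X|%:R * \sum_x u x ^+ 2 + #|X|%:R * \sum_y v y ^+ 2
  - 2 * (\sum_x u x) * (\sum_y v y).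
Proof.
have row x : \sum_(y : X) (u x - v y) ^+ 2 =
    #|X|%:R * u x ^+ 2 + \sum_y v y ^+ 2 - 2 * u x * \sum_y v y.
  rewrite (eq_bigr (fun y => u x ^+ 2 + (v y ^+ 2 - 2 * u x * v y))).
    by rewrite big_split /= sumrB sumr_const -mulr_natl -mulr_sumr; ring.
  by move=> y _; ring.
rewrite /pair_sqdiff (eq_bigr _ (fun x _ => row x)) sumrB big_split /=.
by rewrite sumr_const -mulr_sumr -mulr_suml -mulr_sumr -mulr_natr; ring.
Qed.

Lemma pair_sqdiff_mean (u v : X -> R) : pair_sqdiff u v =
  (pair_sqdiff u u + pair_sqdiff v v) / 2 + (\sum_x u x - \sum_x v x) ^+ 2.
Proof. by rewrite !pair_sqdiffE; field. Qed.

Lemma pair_sqdiff_ge_card (f : X -> R) (A B : {set X}) (c : R) :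
    (forall a b, a \in A -> b \in B -> c <= (f a - f b) ^+ 2) ->
  #|A|%:R * #|B|%:R * c <= pair_sqdiff f f.
Proof.
move=> lb; rewrite /pair_sqdiff (bigID (mem A)) /= -[leLHS]addr0.
apply: lerD; last by apply: sumr_ge0 => x _; apply: sumr_ge0 => y _; apply: sqr_ge0.
rewrite -mulrA -sum1_card natr_sum mulr_suml; apply: ler_sum => a aA.
rewrite (bigID (mem B)) /= -[leLHS]addr0 mul1r.
apply: lerD; last by apply: sumr_ge0 => y _; apply: sqr_ge0.
rewrite -sum1_card natr_sum mulr_suml; apply: ler_sum => b bB.
by rewrite mul1r lb.
Qed.

End PairSquaredDifferences.

Section HammingSpace.
Variable T : finType.
Notation word r := {ffun 'I_r -> T}.

Definition hamming r (x y : word r) : nat := \sum_(i < r) (x i != y i).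

Lemma hammingxx r (x : word r) : hamming x x = 0%N.
Proof. by rewrite /hamming big1 // => i _; rewrite eqxx. Qed.

Lemma hammingC r (x y : word r) : hamming x y = hamming y x.
Proof. by apply: eq_bigr => i _; rewrite eq_sym. Qed.

Lemma hamming_triangle r (x y z : word r) :
  (hamming x z <= hamming x y + hamming y z)%N.
Proof.
rewrite /hamming -big_split /=; apply: leq_sum => i _.
by case: (eqVneq (x i) (y i)) => [->|] //=; rewrite (leq_trans (leq_b1 _)) ?leq_addr.
Qed.

Definition cons_word r (a : T) (x : word r) : word r.+1 :=
  [ffun i => if unlift ord0 i is Some j then x j else a].

Lemma cons_word0 r a (x : word r) : cons_word a x ord0 = a.
Proof. by rewrite ffunE unlift_none. Qed.

Lemma cons_word_lift r a (x : word r) i : cons_word a x (lift ord0 i) = x i.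
Proof. by rewrite ffunE liftK. Qed.

Lemma hamming_cons r a b (x y : word r) :
  hamming (cons_word a x) (cons_word b y) = ((a != b) + hamming x y)%N.
Proof.
rewrite /hamming big_ord_recl !cons_word0; congr (_ + _)%N.
by apply: eq_bigr => i _; rewrite !cons_word_lift.
Qed.

Lemma sum_word_cons (R : nmodType) r (F : word r.+1 -> R) :
  \sum_(x : word r.+1) F x = \sum_(a : T) \sum_(x : word r) F (cons_word a x).
Proof.
rewrite pair_big /= (reindex (fun p : T * word r => cons_word p.1 p.2)) //=.
exists (fun x => (x ord0, [ffun i => x (lift ord0 i)])) => [[a x] _|x _] /=.
  by rewrite cons_word0; congr (_, _); apply/ffunP => i; rewrite ffunE cons_word_lift.
apply/ffunP => i; rewrite ffunE; case: unliftP => [j ->|->] //.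
by rewrite ffunE.
Qed.

Lemma card_word r : #|{: word r}| = (#|T| ^ r)%N.
Proof. by rewrite card_ffun card_ord. Qed.

Lemma hamming_lipschitz_pair_sqdiff (R : realFieldType) r (f : word r -> R) :
    (forall x y, `|f x - f y| <= (hamming x y)%:R) ->
  pair_sqdiff f f <= 2 * r%:R * (#|T| ^ r)%:R ^+ 2.
Proof.
elim: r f => [|r IH] f Lf.
  rewrite mulr0 mul0r /pair_sqdiff big1 // => x _; rewrite big1 // => y _.
  have := Lf x y; rewrite /hamming big_ord0 normr_le0 subr_eq0 => /eqP ->.
  by rewrite subrr expr0n.
set N : R := (#|T| ^ r)%:R.
pose g a (x : word r) := f (cons_word a x).
have Lg a x y : `|g a x - g a y| <= (hamming x y)%:R.
  by have := Lf (cons_word a x) (cons_word a y); rewrite hamming_cons eqxx.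
have mean_gap a b : (\sum_x g a x - \sum_x g b x) ^+ 2 <= N ^+ 2.
  rewrite -real_normK ?num_real // lerXn2r ?nnegrE //.
  rewrite -sumrB (le_trans (ler_norm_sum _ _ _)) // /N -card_word -sum1_card natr_sum.
  apply: ler_sum => x _; apply: le_trans (Lf _ _) _.
  by rewrite hamming_cons hammingxx addn0 ler_nat leq_b1.
have slice a b : pair_sqdiff (g a) (g b) <= (2 * r%:R + 1) * N ^+ 2.
  rewrite pair_sqdiff_mean.
  have := IH (g a) (Lg a); have := IH (g b) (Lg b); have := mean_gap a b.
  move: (pair_sqdiff _ _) (pair_sqdiff _ _) (_ ^+ 2) => Sa Sb M; lra.
have -> : pair_sqdiff f f = \sum_a \sum_b pair_sqdiff (g a) (g b).
  rewrite /pair_sqdiff sum_word_cons; apply: eq_bigr => a _.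
  rewrite exchange_big sum_word_cons; apply: eq_bigr => b _.
  by rewrite exchange_big.
apply: le_trans (_ : \sum_(a : T) \sum_(b : T) (2 * r%:R + 1) * N ^+ 2 <= _).
  by apply: ler_sum => a _; apply: ler_sum => b _; apply: slice.
rewrite !sumr_const -mulrnA -[leLHS]mulr_natr natrM expnSr natrM -/N -[r.+1]addn1 natrD.
set K : R := #|T|%:R.
have -> : 2 * (r%:R + 1) * (N * K) ^+ 2 =
    (2 * r%:R + 1) * N ^+ 2 * (K * K) + (N * K) ^+ 2 by ring.
by rewrite lerDl sqr_ge0.
Qed.

End HammingSpace.

Section NearestPoint.
Variables (T : finType) (r : nat) (A : {set {ffun 'I_r -> T}}).
Variables (a0 : {ffun 'I_r -> T}) (a0A : a0 \in A).

Definition nearest (b : {ffun 'I_r -> T}) := [arg min_(a < a0 in A) hamming b a].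

Definition hamming_to_set (b : {ffun 'I_r -> T}) := hamming b (nearest b).

Lemma nearest_in b : nearest b \in A.
Proof. by rewrite /nearest; case: arg_minnP. Qed.

Lemma hamming_to_set_min b a : a \in A -> (hamming_to_set b <= hamming b a)%N.
Proof. by rewrite /hamming_to_set /nearest; case: arg_minnP => // a1 _ min /min. Qed.

Lemma hamming_to_set0 a : a \in A -> hamming_to_set a = 0%N.
Proof. by move=> aA; apply/eqP; rewrite -leqn0 -(hammingxx a) hamming_to_set_min. Qed.

Lemma hamming_to_set_lipschitz (R : realDomainType) b c :
  `|(hamming_to_set b)%:R - (hamming_to_set c)%:R| <= (hamming b c)%:R :> R.
Proof.
have step x y : (hamming_to_set x <= hamming x y + hamming_to_set y)%N.
  exact: leq_trans (hamming_to_set_min x (nearest_in y)) (hamming_triangle _ y _).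
have := step b c; have := step c b; rewrite hammingC -!(ler_nat R) !natrD.
by rewrite ler_norml => *; apply/andP; split; lra.
Qed.

End NearestPoint.

Lemma hamming_close_pair (R : realFieldType) (T : finType) r
    (A B : {set {ffun 'I_r -> T}}) (t : R) :
    0 <= t -> 2 * r%:R * (#|T| ^ r)%:R ^+ 2 < #|A|%:R * #|B|%:R * t ^+ 2 ->
  exists a b, [/\ a \in A, b \in B & (hamming a b)%:R <= t].
Proof.
move=> t_ge0 spread.
have [a0 a0A] : exists a0, a0 \in A.
  apply/set0Pn; rewrite -card_gt0; apply: contraTT spread.
  by rewrite -leqNgt leqn0 => /eqP->; rewrite !mul0r -leNgt !mulr_ge0 ?sqr_ge0.
pose f b : R := (hamming_to_set A a0 b)%:R.
have [b /andP[bB close] | far] := pickP [pred b in B | f b <= t].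
  exists (nearest A a0 b), b; split=> //; first exact: nearest_in.
  by rewrite hammingC.
have far_sq a b : a \in A -> b \in B -> t ^+ 2 <= (f a - f b) ^+ 2.
  move=> aA bB; have := far b; rewrite /= bB /= => /negbT; rewrite -ltNge => tb.
  by rewrite /f hamming_to_set0 // sub0r sqrrN lerXn2r ?nnegrE ?ler0n // ltW.
have := pair_sqdiff_ge_card far_sq.
have := hamming_lipschitz_pair_sqdiff (@hamming_to_set_lipschitz _ _ _ _ a0A R).
by move=> up low; move: spread; rewrite ltNge (le_trans low up).
Qed.

Section RootsOfUnity.
Variable R : realType.

Lemma d0xx k i : d0 R k i i = 0.
Proof. by rewrite /d0 !subrr expr0n /= addr0 sqrtr0 mul0r. Qed.

Lemma d0_le1 k i j : d0 R k i j <= 1.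
Proof.
rewrite /d0 ler_pdivrMr // mul1r -[X in _ <= X]ger0_norm // -sqrtr_sqr.
apply: ler_wsqrtr; have := cos2Dsin2 (ang R k i); have := cos2Dsin2 (ang R k j).
move: (cos _) (sin _) (cos _) (sin _) => c1 s1 c2 s2 *.
have := sqr_ge0 (c1 + c2); have := sqr_ge0 (s1 + s2); nra.
Qed.

Lemma quotLE k r (a1 a2 : Lam k.+1 r) j : quotL a1 a2 j = nat_of_ord (a2 j - a1 j).
Proof. by rewrite /quotL /= modnDmr. Qed.

Lemma dist_quotL_translate k r (x a b : Lam k.+1 r) :
  @dist R k.+1 r (fun j => x j : nat) (quotL a (b + x)) <= (hamming a b)%:R.
Proof.
rewrite /dist /hamming natr_sum; apply: ler_sum => j _.
have [ab|_] := eqVneq (a j) (b j); last exact: d0_le1.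
by rewrite quotLE ffunE ab (addrC (b j)) addrK d0xx.
Qed.

End RootsOfUnity.

Theorem lemma6p3 (R : realType) (eps delta : R) (k : nat) :
  0 < eps -> 0 < delta -> (0 < k)%N ->
  exists N : nat, forall (r : nat) (A : {set Lam k r}),
    (N < r)%N ->
    delta * #|[set: Lam k r]|%:R <= #|A|%:R ->
    forall x : Lam k r, exists a1 a2 : Lam k r,
      a1 \in A /\ a2 \in A /\
      @inU R k r (r%:R * eps) (fun j => (x j : nat)) (quotL a1 a2).
Proof.
move=> eps_gt0 delta_gt0; case: k => // k _.
set c := delta ^+ 2 * eps ^+ 2.
have c_gt0 : 0 < c by rewrite mulr_gt0 ?exprn_gt0.
exists (Num.truncn (2 / c)) => r A r_large A_dense x.
set N : R := (#|'I_k.+1| ^ r)%:R.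
have N_gt0 : 0 < N by rewrite ltr0n expn_gt0 card_ord.
have r_gt0 : 0 < r%:R :> R by rewrite ltr0n (leq_ltn_trans _ r_large).
have rc_gt2 : 2 < r%:R * c.
  by rewrite -ltr_pdivrMr // (lt_le_trans (truncnS_gt _)) // ler_nat.
set B := (fun b : {ffun 'I_r -> 'I_k.+1} => b + x) @^-1: A.
have cardB : #|B| = #|A| by rewrite card_preimset //; apply: addIr.
rewrite cardsT card_word -/N in A_dense.
have spread : 2 * r%:R * N ^+ 2 < #|A|%:R * #|B|%:R * (r%:R * eps) ^+ 2.
  apply: lt_le_trans (_ : (delta * N) ^+ 2 * (r%:R * eps) ^+ 2 <= _).
    have -> : (delta * N) ^+ 2 * (r%:R * eps) ^+ 2 = r%:R * N ^+ 2 * (r%:R * c).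
      by rewrite /c; ring.
    have -> : 2 * r%:R * N ^+ 2 = r%:R * N ^+ 2 * 2 by ring.
    by rewrite ltr_pM2l ?mulr_gt0 ?exprn_gt0.
  rewrite cardB -expr2 ler_pM2r ?exprn_gt0 ?mulr_gt0 // lerXn2r ?nnegrE //.
  by rewrite mulr_ge0 ?ltW.
have [a [b [aA bB close]]] := hamming_close_pair (mulr_ge0 (ltW r_gt0) (ltW eps_gt0)) spread.
exists a, (b + x); split=> //; split; first by rewrite inE in bB.
exact: le_trans (dist_quotL_translate R x a b) close.
Qed.
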